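(* Let $A\in\mathbb{R}^{n\times n}$ and $B\in\mathbb{R}^{n\times m}$ with $\rho(|A|)<1$, and let $T$ be a positive integer. Let $i,j\in\{1,\dots,n\}$, $i\neq j$, and $w\in\mathbb{R}$ be such that $\rho(|A|+|w|e_je_i^{\top})<1$. Then $$\log\det(\mathcal{W}_A)\le\sigma n\log\Big(\frac{\operatorname{tr}(\mathcal{W}_A)}{n^{1/\sigma}}\Big)\le\sigma n\log\Big(\frac{\operatorname{tr}(\mathcal{H}_{\mathcal{X}})}{n^{1/\sigma}}\Big),$$ with $\sigma=1$ if $\operatorname{tr}(\mathcal{W}_A)\le1$ and $\sigma=2$ if $\operatorname{tr}(\mathcal{W}_A)>1$; and, with $\tau=(1+\alpha\beta)\operatorname{tr}(\mathcal{H}_{\mathcal{X}})+\alpha^2\gamma\bar\gamma$, $$\log\det(\mathcal{W}_{A+we_je_i^{\top}})\le\sigma n\log\Big(\frac{\tau}{n^{1/\sigma}}\Big),$$ with $\sigma=1$ if $\tau\le1$ and $\sigma=2$ if $\tau>1$.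
   Context: $|\cdot|$ is taken entrywise; $\rho$ is the spectral radius; $e_k$ is the $k$-th canonical unit vector; $\|\cdot\|$ is the Euclidean norm. For $Z\in\mathbb{R}^{n\times n}$, $\mathcal{W}_Z=\sum_{t=0}^{T-1}Z^tBB^{\top}(Z^t)^{\top}$ (the paper assumes controllability, so Gramians are positive definite). Define $\mathcal{X}=(I-|A|)^{-1}$, $\mathcal{H}_{\mathcal{X}}=\mathcal{X}|B||B|^{\top}\mathcal{X}^{\top}$, $\alpha_{pq}=\frac{|w|}{1-|w|e_p^{\top}\mathcal{X}e_q}$, $\alpha=\max_{p\neq q}\alpha_{pq}$, $\beta=\max\{\max_{p\neq q}2e_p^{\top}\mathcal{X}e_q,\ \max_{p\neq q}e_p^{\top}\mathcal{X}e_q+\max_{q}\|\mathcal{X}e_q\|\}$, $\gamma=\max_k e_k^{\top}\mathcal{X}^{\top}\mathcal{X}e_k$, $\bar\gamma=\max_k e_k^{\top}\mathcal{X}|B||B|^{\top}\mathcal{X}^{\top}e_k$. *)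

From HB Require Import structures.
From mathcomp Require Import all_boot all_order all_algebra.
From mathcomp Require Import all_classical all_reals all_analysis.
From mathcomp Require Import complex.
Set Implicit Arguments. Unset Strict Implicit. Unset Printing Implicit Defensive.
Import Order.TTheory GRing.Theory Num.Theory.
Local Open Scope ring_scope.
Local Open Scope classical_set_scope.

Section Defs.
Variable R : realType.

Definition absmx (p q : nat) (M : 'M[R]_(p, q)) : 'M[R]_(p, q) :=
  map_mx (fun x => `|x|) M.

Definition spectral_radius (n : nat) (M : 'M[R]_n) : R :=
  sup [set Normc.normc z | z in
        [set z : R[i] | eigenvalue (map_mx (fun x => (x%:C)%C) M) z]].

Definition e_ (n : nat) (k : 'I_n) : 'cV[R]_n := delta_mx k 0.

Definition gramian (n m T : nat) (Z : 'M[R]_n) (B : 'M[R]_(n, m)) : 'M[R]_n :=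
  \sum_(t < T) (Z ^+ t *m B *m B^T *m (Z ^+ t)^T).

(* (Z,B) controllable over horizon T: [B, ZB, ..., Z^(T-1)B] has rank n,
   i.e. the columns of the Z^t B span R^n *)
Definition controllable (n m T : nat) (Z : 'M[R]_n) (B : 'M[R]_(n, m)) : bool :=
  row_full (\sum_(t < T) <<(Z ^+ t *m B)^T>>)%MS.

Definition Xmx (n : nat) (A : 'M[R]_n) : 'M[R]_n := invmx (1%:M - absmx A).

Definition HX (n m : nat) (A : 'M[R]_n) (B : 'M[R]_(n, m)) : 'M[R]_n :=
  Xmx A *m absmx B *m (absmx B)^T *m (Xmx A)^T.

Definition Xent (n : nat) (A : 'M[R]_n) (p q : 'I_n) : R :=
  ((e_ p)^T *m Xmx A *m e_ q) ord0 ord0.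

Definition alpha_pq (n : nat) (A : 'M[R]_n) (w : R) (p q : 'I_n) : R :=
  `|w| / (1 - `|w| * Xent A p q).

(* Maxima over nonempty finite index sets: the neutral element of the
   big max is chosen as one member of the set (the pair (j,i), resp. i),
   so the big operator is exactly the maximum. *)
Definition alpha (n : nat) (A : 'M[R]_n) (w : R) (i j : 'I_n) : R :=
  \big[Num.max/alpha_pq A w j i]_(pq : 'I_n * 'I_n | pq.1 != pq.2)
     alpha_pq A w pq.1 pq.2.


Definition colnorm (n : nat) (A : 'M[R]_n) (q : 'I_n) : R :=
  Num.sqrt (\sum_(k < n) ((Xmx A *m e_ q) k ord0) ^+ 2).

Definition beta (n : nat) (A : 'M[R]_n) (i j : 'I_n) : R :=
  let maxX := \big[Num.max/Xent A j i]_(pq : 'I_n * 'I_n | pq.1 != pq.2)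
                 Xent A pq.1 pq.2 in
  let maxN := \big[Num.max/colnorm A i]_(q < n) colnorm A q in
  Num.max (\big[Num.max/2 * Xent A j i]_(pq : 'I_n * 'I_n | pq.1 != pq.2)
               (2 * Xent A pq.1 pq.2))
          (maxX + maxN).

Definition gamma (n : nat) (A : 'M[R]_n) (i : 'I_n) : R :=
  let g k := ((e_ k)^T *m (Xmx A)^T *m Xmx A *m e_ k) ord0 ord0 in
  \big[Num.max/g i]_(k < n) g k.

Definition gammabar (n m : nat) (A : 'M[R]_n) (B : 'M[R]_(n, m)) (i : 'I_n) : R :=
  let g k := ((e_ k)^T *m Xmx A *m absmx B *m (absmx B)^T *m (Xmx A)^T *m e_ k)
               ord0 ord0 in
  \big[Num.max/g i]_(k < n) g k.

Definition sigma_of (x : R) : R := if x <= 1 then 1 else 2.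

Definition bound (n : nat) (sg x : R) : R :=
  sg * n%:R * ln (x / (n%:R `^ sg^-1)).

End Defs.
Arguments e_ {R n} k.

(* For a positive definite Gramian W, Hadamard's inequality and AM-GM give
   ln det W <= n ln (tr W / n), and sigma n ln (t / n^(1/sigma)) dominates
   n ln (t / n) and is monotone in t; so everything reduces to bounding traces.
   If |Z| <= M entrywise and X = (I - M)^-1 >= 0, then
   tr W_Z = sum_t ||Z^t B||^2 <= sum_t ||M^t |B| ||^2 <= ||(sum_t M^t) |B| ||^2
   <= ||X |B| ||^2, because sum_(t<T) M^t = X (I - M^T) <= X entrywise.
   Nonnegativity of X follows from rho(M) < 1: (sI - M)^-1 is invertible for
   every s >= 1 and is a nonnegative Neumann series for large s, and
   nonnegativity propagates down to s = 1 in steps of uniform length.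
   For A + w e_j e_i^T one takes M = |A| + |w| e_j e_i^T; by Sherman-Morrison
   its X is X_A + a X_A e_j e_i^T X_A with a = alpha_ij, and expanding the
   Frobenius norm gives the three terms of tau, the cross term being bounded
   by Cauchy-Schwarz. *)

From HB Require Import structures.
From mathcomp Require Import all_boot all_order all_algebra.
From mathcomp Require Import all_classical all_reals all_analysis.
From mathcomp Require Import complex.
From mathcomp Require Import ring lra.
Set Implicit Arguments. Unset Strict Implicit. Unset Printing Implicit Defensive.
Import Order.TTheory GRing.Theory Num.Theory.
Local Open Scope ring_scope.

Lemma mulmx1_invmx (R : comUnitRingType) n (P Q : 'M[R]_n) :
  P *m Q = 1%:M -> invmx P = Q.
Proof.
move=> PQ; have [P_unit _] := mulmx1_unit PQ.
by rewrite -[invmx P]mulmx1 -PQ mulmxA mulVmx // mul1mx.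
Qed.

Lemma invmx_sub (R : comUnitRingType) n (P Q : 'M[R]_n) :
  P \in unitmx -> Q \in unitmx -> invmx Q - invmx P = invmx Q *m (P - Q) *m invmx P.
Proof.
move=> P_unit Q_unit.
by rewrite mulmxBr mulmxBl mulVmx // mul1mx -mulmxA mulmxV // mulmx1.
Qed.

Section EntrywiseBounds.
Variable R : realType.
Implicit Types (p q r : nat).

Definition nnegmx p q (M : 'M[R]_(p, q)) := forall a b, 0 <= M a b.

Definition abs_rowsum_le p q (M : 'M[R]_(p, q)) (c : R) :=
  forall a, \sum_b `|M a b| <= c.

Definition abs_le_mx p q (Z M : 'M[R]_(p, q)) := forall a b, `|Z a b| <= M a b.

Lemma absmx_nneg p q (M : 'M[R]_(p, q)) : nnegmx (absmx M).
Proof. by move=> a b; rewrite mxE. Qed.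

Lemma nneg_abs_le_mx p q (M : 'M[R]_(p, q)) : nnegmx M -> abs_le_mx M M.
Proof. by move=> M0 a b; rewrite ger0_norm. Qed.

Lemma abs_le_absmx p q (M : 'M[R]_(p, q)) : abs_le_mx M (absmx M).
Proof. by move=> a b; rewrite mxE. Qed.

Lemma nnegmxZ p q c (M : 'M[R]_(p, q)) : 0 <= c -> nnegmx M -> nnegmx (c *: M).
Proof. by move=> c0 M0 a b; rewrite mxE mulr_ge0. Qed.

Lemma nnegmx_mul p q r (M : 'M[R]_(p, q)) (N : 'M[R]_(q, r)) :
  nnegmx M -> nnegmx N -> nnegmx (M *m N).
Proof. by move=> M0 N0 a b; rewrite mxE sumr_ge0 // => k _; rewrite mulr_ge0. Qed.

Lemma nnegmx_exp n (M : 'M[R]_n) t : nnegmx M -> nnegmx (M ^+ t).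
Proof.
move=> M0; elim: t => [|t IH]; first by move=> a b; rewrite expr0 mxE ler0n.
by rewrite exprS; apply: nnegmx_mul.
Qed.

Lemma nnegmx_sum I (r : seq I) (P : pred I) p q (F : I -> 'M[R]_(p, q)) :
  (forall i, nnegmx (F i)) -> nnegmx (\sum_(i <- r | P i) F i).
Proof. by move=> F0 a b; rewrite summxE sumr_ge0 // => i _; apply: F0. Qed.

Lemma abs_le_mx_mul p q r (Z M : 'M[R]_(p, q)) (Z' M' : 'M[R]_(q, r)) :
  abs_le_mx Z M -> abs_le_mx Z' M' -> abs_le_mx (Z *m Z') (M *m M').
Proof.
move=> ZM ZM' a b; rewrite !mxE; apply: (le_trans (ler_norm_sum _ _ _)).
by apply: ler_sum => k _; rewrite normrM ler_pM.
Qed.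

Lemma abs_le_mx_exp n (Z M : 'M[R]_n) t : abs_le_mx Z M -> abs_le_mx (Z ^+ t) (M ^+ t).
Proof.
move=> ZM; elim: t => [|t IH]; last by rewrite !exprS; apply: abs_le_mx_mul.
by move=> a b; rewrite !expr0 !mxE; case: (a == b); rewrite ?normr1 ?normr0.
Qed.

Lemma abs_le_mx_add p q (Z Z' M M' : 'M[R]_(p, q)) :
  abs_le_mx Z M -> abs_le_mx Z' M' -> abs_le_mx (Z + Z') (M + M').
Proof. by move=> ZM ZM' a b; rewrite !mxE (le_trans (ler_normD _ _)) ?lerD. Qed.

Lemma abs_le_mxZ p q c (Z M : 'M[R]_(p, q)) :
  abs_le_mx Z M -> abs_le_mx (c *: Z) (`|c| *: M).
Proof. by move=> ZM a b; rewrite !mxE normrM ler_wpM2l. Qed.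

Lemma abs_rowsum_le_trans p q (M : 'M[R]_(p, q)) c d :
  abs_rowsum_le M c -> c <= d -> abs_rowsum_le M d.
Proof. by move=> Mc cd a; apply: le_trans (Mc a) cd. Qed.

Lemma abs_rowsum_leZ p q (M : 'M[R]_(p, q)) c k :
  abs_rowsum_le M c -> abs_rowsum_le (k *: M) (`|k| * c).
Proof.
move=> Mc a; under eq_bigr => b _ do rewrite mxE normrM.
by rewrite -mulr_sumr ler_wpM2l.
Qed.

Lemma abs_rowsum_le_total p q (M : 'M[R]_(p, q)) :
  abs_rowsum_le M (\sum_a \sum_b `|M a b|).
Proof. by move=> a; rewrite (bigD1 a) //= lerDl sumr_ge0 // => ? _; rewrite sumr_ge0. Qed.

Lemma abs_rowsum_le_mul p q r (M : 'M[R]_(p, q)) (N : 'M[R]_(q, r)) c d :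
  abs_rowsum_le M c -> abs_rowsum_le N d -> 0 <= d -> abs_rowsum_le (M *m N) (c * d).
Proof.
move=> Mc Nd d0 a.
apply: (@le_trans _ _ (\sum_b \sum_k `|M a k| * `|N k b|)).
  apply: ler_sum => b _; rewrite mxE; apply: (le_trans (ler_norm_sum _ _ _)).
  by apply: ler_sum => k _; rewrite normrM.
rewrite exchange_big /=; apply: (@le_trans _ _ (\sum_k `|M a k| * d)).
  by apply: ler_sum => k _; rewrite -mulr_sumr ler_wpM2l.
by rewrite -mulr_suml ler_wpM2r.
Qed.

End EntrywiseBounds.

Section Contraction.
Variables (R : realType) (n : nat) (N : 'M[R]_n) (q : R).
Hypotheses (Nq : abs_rowsum_le N q) (q_lt1 : q < 1).

Lemma contraction_unitmx : 1%:M - N \in unitmx.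
Proof.
rewrite -row_free_unit -kermx_eq0; apply/eqP/row_matrixP => k; rewrite row0.
set v := row k _; have : v *m (1%:M - N) = 0 by rewrite -row_mul mulmx_ker row0.
rewrite mulmxBr mulmx1 => /eqP; rewrite subr_eq0 => /eqP vN.
have s_le : \sum_b `|v 0 b| <= q * \sum_b `|v 0 b|.
  apply: (@le_trans _ _ (\sum_b \sum_a `|v 0 a| * `|N a b|)).
    apply: ler_sum => b _; rewrite {1}vN mxE; apply: (le_trans (ler_norm_sum _ _ _)).
    by apply: ler_sum => a _; rewrite normrM.
  rewrite exchange_big /= mulr_sumr; apply: ler_sum => a _.
  by rewrite -mulr_sumr mulrC ler_wpM2r.
have s0 : \sum_b `|v 0 b| = 0.
  have : 0 <= \sum_b `|v 0 b| by rewrite sumr_ge0.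
  move: s_le; set s := \sum_b _ => s_le s_ge0.
  have : (1 - q) * s <= 0 by rewrite mulrBl mul1r subr_le0.
  by rewrite pmulr_rle0 ?subr_gt0 // => s_le0; apply/eqP; rewrite eq_le s_le0.
change (v = 0); apply/rowP => b; rewrite [RHS]mxE; apply/eqP; rewrite -normr_eq0.
by move/eqP: s0; rewrite psumr_eq0 // => /allP /(_ b (mem_index_enum b)).
Qed.

Lemma invmx_1B_fixpoint : invmx (1%:M - N) = 1%:M + N *m invmx (1%:M - N).
Proof.
set Y := invmx _; have : (1%:M - N) *m Y = 1%:M by rewrite mulmxV ?contraction_unitmx.
by rewrite mulmxBl mul1mx => <-; rewrite subrK.
Qed.

Lemma contraction_inv_rowsum : abs_rowsum_le (invmx (1%:M - N)) (1 - q)^-1.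
Proof.
have := invmx_1B_fixpoint; case: n N Nq => [|n'] N' N'q Yfix a; first by case: a.
set Y := invmx _ in Yfix *.
have [a0 _ a0_max] := @arg_maxP _ _ _ ord0 xpredT (fun a => \sum_b `|Y a b|) isT.
have Y_le a1 : \sum_b `|Y a1 b| <= 1 + q * \sum_b `|Y a0 b|.
  rewrite {1}Yfix; apply: (@le_trans _ _ (\sum_b (`|(1%:M : 'M[R]_n'.+1) a1 b| +
                                         \sum_k `|N' a1 k| * `|Y k b|))).
    apply: ler_sum => b _; rewrite mxE; apply: (le_trans (ler_normD _ _)).
    rewrite lerD2l mxE; apply: (le_trans (ler_norm_sum _ _ _)).
    by apply: ler_sum => k _; rewrite normrM.
  rewrite big_split /=; apply: lerD.
    rewrite (bigD1 a1) //= big1 ?mxE ?eqxx ?normr1 ?addr0 //.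
    by move=> b ba; rewrite mxE eq_sym (negbTE ba) normr0.
  rewrite exchange_big /= -/Y.
  apply: (@le_trans _ _ (\sum_k `|N' a1 k| * \sum_b `|Y a0 b|)).
    by apply: ler_sum => k _; rewrite -mulr_sumr ler_wpM2l //; apply: a0_max.
  by rewrite -mulr_suml ler_wpM2r // sumr_ge0.
have q1 : 0 < 1 - q by rewrite subr_gt0.
apply: le_trans (a0_max a isT) _.
rewrite -(ler_pM2l q1) mulfV ?gt_eqF //.
by move: (Y_le a0); set s := \sum_b _; nra.
Qed.

Lemma contraction_inv_nneg : nnegmx N -> nnegmx (invmx (1%:M - N)).
Proof.
have := invmx_1B_fixpoint; case: n N Nq => [|n'] N' N'q Yfix N'0 a b; first by case: a.
set Y := invmx _ in Yfix *.
have [a0 _ a0_min] := @arg_maxP _ _ _ ord0 xpredT (fun a => - Y a b) isT.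
rewrite leNgt; apply/negP => Yab_lt0.
have Ya0_lt0 : Y a0 b < 0 by apply: le_lt_trans Yab_lt0; rewrite -lerN2; apply: a0_min.
have Ya0_ge : \sum_k N' a0 k * Y a0 b <= Y a0 b.
  rewrite {2}Yfix !mxE; apply: (@le_trans _ _ (\sum_k N' a0 k * Y k b)).
    by apply: ler_sum => k _; rewrite ler_wpM2l // -lerN2; apply: a0_min.
  by rewrite lerDr ler0n.
have rowsum_le : \sum_k N' a0 k <= q.
  by apply: le_trans (N'q a0); apply: ler_sum => k _; rewrite ger0_norm.
move: Ya0_ge; rewrite -mulr_suml -{2}[Y a0 b]mul1r ler_nM2r // => s_ge1.
by have := le_trans s_ge1 rowsum_le; rewrite leNgt q_lt1.
Qed.

End Contraction.

Section SpectralRadius.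
Variable R : realType.
Local Notation Cmx M := (map_mx (fun x : R => (x%:C)%C) M).

Lemma eigenvalue_normc_le n (M : 'M[R]_n) (z : R[i]) :
  eigenvalue (Cmx M) z -> Normc.normc z <= \sum_a \sum_b `|M a b|.
Proof.
case/eigenvalueP => v vM v_neq0; case: n M v vM v_neq0 => [|n] M v vM v_neq0.
  by case/negP: v_neq0; apply/eqP/rowP => -[].
have [k _ k_max] := @arg_maxP _ _ _ ord0 xpredT (fun k => Normc.normc (v 0 k)) isT.
have normcE (x : R[i]) : `|x| = ((Normc.normc x)%:C)%C by [].
have vk_gt0 : 0 < `|v 0 k|.
  rewrite normr_gt0; apply: contra v_neq0 => /eqP vk0; apply/eqP/rowP => a.
  rewrite mxE; apply/eqP; rewrite -normr_eq0 eq_le normr_ge0 andbT.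
  have := k_max a isT; rewrite vk0 /= expr0n addr0 sqrtr0.
  by rewrite normcE -lecR.
have zvk : `|z| * `|v 0 k| <= ((\sum_a `|M a k|)%:C)%C * `|v 0 k|.
  rewrite -normrM; have := congr1 (fun u : 'rV_n.+1 => u 0 k) vM; rewrite /= !mxE => <-.
  apply: (le_trans (ler_norm_sum _ _ _)).
  rewrite rmorph_sum /= mulr_suml; apply: ler_sum => a _.
  rewrite mxE normrM mulrC.
  have -> : `|((M a k)%:C)%C| = ((`|M a k|)%:C)%C.
    by rewrite normcE /= expr0n /= addr0 sqrtr_sqr.
  apply: ler_wpM2l; first by rewrite lecR.
  by rewrite !normcE lecR; apply: k_max.
rewrite -lecR -normcE; apply: le_trans (_ : _ <= ((\sum_a `|M a k|)%:C)%C) _.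
  by rewrite -(ler_pM2r vk_gt0).
by rewrite lecR; apply: ler_sum => a _; rewrite (bigD1 k) //= lerDl sumr_ge0.
Qed.

Lemma spectral_radius_lt1_unitmx n (M : 'M[R]_n) s :
  spectral_radius M < 1 -> 1 <= s -> s%:M - M \in unitmx.
Proof.
move=> M_lt1 s_ge1; rewrite -opprB -scaleN1r unitmxZ ?unitrN ?unitr1 //.
apply/negPn/negP => s_sing.
have s_eig : eigenvalue M s by rewrite /eigenvalue /eigenspace kermx_eq0 row_free_unit.
have sC_eig : eigenvalue (Cmx M) ((s%:C)%C).
  by rewrite eigenvalue_root_char -map_char_poly fmorph_root -eigenvalue_root_char.
have eig_ub : has_ubound [set Normc.normc z | z in [set z | eigenvalue (Cmx M) z]].
  by exists (\sum_a \sum_b `|M a b|) => x [z z_eig <-]; apply: eigenvalue_normc_le.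
have := ub_le_sup eig_ub (ex_intro2 _ _ ((s%:C)%C) sC_eig erefl).
rewrite /= expr0n /= addr0 sqrtr_sqr ger0_norm ?(le_trans ler01) // => s_le.
by have := lt_le_trans (le_lt_trans s_le M_lt1) s_ge1; rewrite ltxx.
Qed.

End SpectralRadius.

Section ResolventNonneg.
Variables (R : realType) (n : nat) (M : 'M[R]_n).
Hypotheses (M_nneg : nnegmx M) (M_unit : forall s, 1 <= s -> s%:M - M \in unitmx).

Let res s := invmx (s%:M - M).

Lemma res_shift s d : 1 <= s -> 1%:M - d *: res s \in unitmx ->
  res (s - d) = invmx (1%:M - d *: res s) *m res s.
Proof.
move=> s_ge1 N_unit; apply: mulmx1_invmx.
have -> : (s - d)%:M - M = (s%:M - M) *m (1%:M - d *: res s).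
  rewrite mulmxBr mulmx1 -scalemxAr mulmxV ?M_unit // scalemx1.
  by rewrite raddfB /= addrAC.
by rewrite -mulmxA (mulmxA _ (invmx _)) mulmxV // mul1mx mulmxV ?M_unit.
Qed.

Lemma res_nneg_down s K d : 1 <= s -> nnegmx (res s) -> abs_rowsum_le (res s) K ->
  0 <= d -> d * K < 1 -> nnegmx (res (s - d)).
Proof.
move=> s_ge1 res_nneg resK d_ge0 dK_lt1.
have dresK : abs_rowsum_le (d *: res s) (d * K).
  by rewrite -{2}(ger0_norm d_ge0); apply: abs_rowsum_leZ.
rewrite (res_shift s_ge1 (contraction_unitmx dresK dK_lt1)).
apply: nnegmx_mul => //; apply: contraction_inv_nneg dresK dK_lt1 _.
exact: nnegmxZ.
Qed.

Lemma res_rowsum_up s K e : 1 <= s -> abs_rowsum_le (res s) K -> 0 <= K ->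
  0 <= e -> e * K <= 2^-1 -> abs_rowsum_le (res (s + e)) (2 * K).
Proof.
move=> s_ge1 resK K_ge0 e_ge0 eK_le.
have eresK : abs_rowsum_le ((- e) *: res s) (e * K).
  by rewrite -{2}(ger0_norm e_ge0) -normrN; apply: abs_rowsum_leZ.
have eK_lt1 : e * K < 1 by apply: le_lt_trans eK_le _; rewrite invf_lt1 // ltr1n.
rewrite -[e]opprK (res_shift s_ge1 (contraction_unitmx eresK eK_lt1)).
apply: abs_rowsum_le_mul => //.
apply: abs_rowsum_le_trans (contraction_inv_rowsum eresK eK_lt1) _.
have eK1_gt0 : 0 < 1 - e * K by rewrite subr_gt0.
rewrite -(ler_pM2r eK1_gt0) mulVf ?gt_eqF //.
have : 2 * (e * K) <= 1 by rewrite -(@ler_pM2l _ 2) // mulfV in eK_le.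
lra.
Qed.

Lemma res_nneg_large : nnegmx (res (1 + \sum_a \sum_b `|M a b|)).
Proof.
set K := \sum_a \sum_b _; set s := 1 + K.
have K_ge0 : 0 <= K by rewrite sumr_ge0 // => a _; rewrite sumr_ge0.
have s_gt0 : 0 < s by rewrite /s; lra.
have sI_M : s%:M - M = s *: (1%:M - s^-1 *: M).
  by rewrite scalerBr scalerA mulfV ?gt_eqF // scale1r scalemx1.
have MsK : abs_rowsum_le (s^-1 *: M) (s^-1 * K).
  rewrite -{2}(ger0_norm (_ : 0 <= s^-1)) ?invr_ge0 ?ltW //.
  exact/abs_rowsum_leZ/abs_rowsum_le_total.
have sK_lt1 : s^-1 * K < 1 by rewrite ltr_pdivrMl // mulr1 /s; lra.
rewrite /res sI_M invmxZ; last by rewrite -sI_M M_unit // lerDl.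
apply: nnegmxZ; first by rewrite invr_ge0 ltW.
by apply: contraction_inv_nneg MsK sK_lt1 _; apply: nnegmxZ; rewrite // invr_ge0 ltW.
Qed.

(* s0 := inf {s >= 1 | res s >= 0}; the row sums of res are bounded near s0,
   so res stays nonnegative a uniform step eps below any s1 in the set close
   to s0, which forces s0 = 1. *)
Lemma invmx_1B_nneg : nnegmx (invmx (1%:M - M)).
Proof.
pose S := [set s : R | 1 <= s /\ nnegmx (res s)]%classic.
have S_lb : has_lbound S by exists 1 => x [].
have S_inf : has_inf S.
  split=> //; exists (1 + \sum_a \sum_b `|M a b|); split; last exact: res_nneg_large.
  by rewrite lerDl sumr_ge0 // => a _; rewrite sumr_ge0.
set s0 := inf S.
have s0_ge1 : 1 <= s0 by apply: lb_le_inf (proj1 S_inf) _ => x [].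
set K := 1 + \sum_a \sum_b `|res s0 a b|.
have K_gt0 : 0 < K by rewrite ltr_pwDl // sumr_ge0 // => a _; rewrite sumr_ge0.
have res_s0K : abs_rowsum_le (res s0) K.
  by apply: abs_rowsum_le_trans (abs_rowsum_le_total _) _; rewrite lerDr.
set eps := (4 * K)^-1.
have eps_gt0 : 0 < eps by rewrite invr_gt0 mulr_gt0.
have epsK : eps * K = 4^-1 by rewrite /eps invfM -mulrA mulVf ?gt_eqF // mulr1.
have [s1 [s1_ge1 res_s1_nneg] s1_lt] := inf_adherent eps_gt0 S_inf.
have s0_le_s1 : s0 <= s1 by apply: ge_inf.
have res_s1K : abs_rowsum_le (res s1) (2 * K).
  rewrite -(subrKC s0 s1); apply: res_rowsum_up; rewrite // ?subr_ge0 //; first exact: ltW.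
  apply: (@le_trans _ _ (eps * K)); first by rewrite ler_pM2r //; lra.
  by rewrite epsK lef_pV2 ?posrE //; lra.
have small_step d : 0 <= d -> d <= eps -> d * (2 * K) < 1.
  move=> d_ge0 d_le; have : d * K <= eps * K by rewrite ler_pM2r.
  by rewrite epsK; lra.
have [s1_near1|s1_far] := lerP (s1 - eps) 1.
  have := @res_nneg_down s1 (2 * K) (s1 - 1) s1_ge1 res_s1_nneg res_s1K.
  rewrite (_ : s1 - (s1 - 1) = 1); last by lra.
  apply; first by rewrite subr_ge0.
  by apply: small_step; rewrite ?subr_ge0 //; lra.
have S_step : S (s1 - eps).
  split; first exact: ltW.
  apply: res_nneg_down s1_ge1 res_s1_nneg res_s1K (ltW eps_gt0) _.
  exact: small_step (ltW eps_gt0) (lexx _).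
by have := ge_inf S_lb S_step; rewrite -/s0; lra.
Qed.

End ResolventNonneg.

Section GramianTrace.
Variable R : realType.
Implicit Types (p q : nat).

Definition sqfrob p q (C : 'M[R]_(p, q)) := \sum_a \sum_b C a b ^+ 2.

Lemma mxtrace_mul_tr p q (C : 'M[R]_(p, q)) : \tr (C *m C^T) = sqfrob C.
Proof.
by apply: eq_bigr => a _; rewrite mxE; apply: eq_bigr => b _; rewrite mxE expr2.
Qed.

Lemma sqfrob_ge0 p q (C : 'M[R]_(p, q)) : 0 <= sqfrob C.
Proof. by rewrite sumr_ge0 // => a _; rewrite sumr_ge0 // => b _; rewrite sqr_ge0. Qed.

Lemma sqfrob_le p q (C D : 'M[R]_(p, q)) : abs_le_mx C D -> sqfrob C <= sqfrob D.
Proof.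
move=> CD; apply: ler_sum => a _; apply: ler_sum => b _.
by rewrite -real_normK ?num_real // lerXn2r ?nnegrE // (le_trans _ (CD a b)).
Qed.

Lemma sum_sqr_le_sqr_sum I (r : seq I) (x : I -> R) :
  (forall i, 0 <= x i) -> \sum_(i <- r) x i ^+ 2 <= (\sum_(i <- r) x i) ^+ 2.
Proof.
move=> x_ge0; elim: r => [|i r IH]; first by rewrite !big_nil expr0n.
have : 0 <= \sum_(j <- r) x j by rewrite sumr_ge0.
have := x_ge0 i.
rewrite !big_cons; move: IH; set S2 := \sum_(_ <- _) _; set S := \sum_(_ <- _) _.
by move: (x i) => xi; nra.
Qed.

Lemma sum_sqfrob_le T p q (P : 'I_T -> 'M[R]_(p, q)) :
  (forall t, nnegmx (P t)) -> \sum_t sqfrob (P t) <= sqfrob (\sum_t P t).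
Proof.
move=> P0; rewrite /sqfrob exchange_big /=; apply: ler_sum => a _.
rewrite exchange_big /=; apply: ler_sum => b _.
by rewrite summxE; apply: sum_sqr_le_sqr_sum => t; apply: P0.
Qed.

Lemma gramianE n m T (Z : 'M[R]_n) (B : 'M[R]_(n, m)) :
  gramian T Z B = \sum_(t < T) (Z ^+ t *m B) *m (Z ^+ t *m B)^T.
Proof. by apply: eq_bigr => t _; rewrite trmx_mul !mulmxA. Qed.

Lemma mxtrace_gramian n m T (Z : 'M[R]_n) (B : 'M[R]_(n, m)) :
  \tr (gramian T Z B) = \sum_(t < T) sqfrob (Z ^+ t *m B).
Proof. by rewrite gramianE raddf_sum /=; apply: eq_bigr => t _; rewrite mxtrace_mul_tr. Qed.

Lemma geometric_sum_le_invmx n T (M : 'M[R]_n) :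
  nnegmx M -> 1%:M - M \in unitmx -> nnegmx (invmx (1%:M - M)) ->
  abs_le_mx (\sum_(t < T) M ^+ t) (invmx (1%:M - M)).
Proof.
move=> M0 M_unit X0 a b.
rewrite ger0_norm; last by apply: nnegmx_sum => t; apply: nnegmx_exp.
have geom : (1%:M - M) *m \sum_(t < T) M ^+ t = 1%:M - M ^+ T.
  by rewrite idmxE mulmxE -[RHS]opprB subrX1 -mulNr opprB.
rewrite -(mulKmx M_unit (\sum_(t < T) M ^+ t)) geom mulmxBr mulmx1.
rewrite mxE [X in _ + X]mxE gerDl oppr_le0.
exact: nnegmx_mul X0 (nnegmx_exp T M0) a b.
Qed.

Lemma mxtrace_gramian_le n m T (Z M : 'M[R]_n) (B : 'M[R]_(n, m)) :
  abs_le_mx Z M -> 1%:M - M \in unitmx -> nnegmx (invmx (1%:M - M)) ->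
  \tr (gramian T Z B) <= sqfrob (invmx (1%:M - M) *m absmx B).
Proof.
move=> ZM M_unit X0; have M0 : nnegmx M by move=> a b; apply: le_trans (ZM a b).
have MtB0 t : nnegmx (M ^+ t *m absmx B) by apply/nnegmx_mul/absmx_nneg/nnegmx_exp.
rewrite mxtrace_gramian; apply: (@le_trans _ _ (\sum_(t < T) sqfrob (M ^+ t *m absmx B))).
  by apply: ler_sum => t _; apply/sqfrob_le/abs_le_mx_mul/abs_le_absmx/abs_le_mx_exp.
apply: le_trans (sum_sqfrob_le MtB0) _; rewrite -mulmx_suml.
apply/sqfrob_le/abs_le_mx_mul; first exact: geometric_sum_le_invmx.
exact/nneg_abs_le_mx/absmx_nneg.
Qed.

End GramianTrace.

Section UnitVectors.
Variable R : realType.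

Lemma mul_e_entry n p (N : 'M[R]_(p, n)) q k : (N *m e_ q) k 0 = N k q.
Proof.
rewrite mxE (bigD1 q) //= big1 ?addr0; first by rewrite mxE !eqxx mulr1.
by move=> l lq; rewrite mxE (negbTE lq) mulr0.
Qed.

Lemma e_tr_mul_entry n p (N : 'M[R]_(n, p)) q k : ((e_ q)^T *m N) 0 k = N q k.
Proof.
rewrite mxE (bigD1 q) //= big1 ?addr0; first by rewrite !mxE !eqxx mul1r.
by move=> l lq; rewrite !mxE (negbTE lq) mul0r.
Qed.

Lemma e_quadform n (N : 'M[R]_n) p q : ((e_ p)^T *m N *m e_ q) 0 0 = N p q.
Proof. by rewrite mul_e_entry e_tr_mul_entry. Qed.

Lemma e_neq0 n (k : 'I_n) : e_ k != 0 :> 'cV[R]_n.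
Proof. by apply/eqP => /matrixP /(_ k 0); rewrite !mxE !eqxx /= => /eqP; rewrite oner_eq0. Qed.

Lemma rank1_mul_entry n p q (P : 'M[R]_(p, n)) (Q : 'M[R]_(n, q)) (i j : 'I_n) a b :
  (P *m (e_ j *m (e_ i)^T) *m Q) a b = P a j * Q i b.
Proof.
rewrite mulmxA -(mulmxA P) (mulmxA P (e_ j)) -(mulmxA (P *m e_ j)).
by rewrite mxE big_ord1 mul_e_entry e_tr_mul_entry.
Qed.

End UnitVectors.

Section ShermanMorrison.
Variables (F : fieldType) (n : nat) (P : 'M[F]_n) (u v : 'cV[F]_n).
Hypothesis P_unit : P \in unitmx.
Let X := invmx P.
Let d := 1 - (v^T *m X *m u) 0 0.

Let vXu : v^T *m X *m u = (1 - d)%:M.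
Proof. by rewrite [LHS]mx11_scalar /d opprB addrC subrK. Qed.

Let PB_Xu : (P - u *m v^T) *m X *m u = d *: u.
Proof.
rewrite mulmxBl mulmxV // mulmxBl mul1mx -!mulmxA (mulmxA v^T) vXu.
by rewrite mul_mx_scalar -{1}[u]scale1r -scalerBl opprB addrC subrK.
Qed.

Lemma sherman_morrison_denom_neq0 : P - u *m v^T \in unitmx -> d != 0.
Proof.
move=> PB_unit; apply/eqP => d0; move: PB_Xu; rewrite d0 scale0r -mulmxA.
move/(canRL (mulKmx PB_unit)); rewrite mulmx0 => Xu0.
have u0 : u = 0 by rewrite -[u]mul1mx -(mulmxV P_unit) -mulmxA Xu0 mulmx0.
by move: d0; rewrite /d u0 mulmx0 mxE subr0 => /eqP; rewrite oner_eq0.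
Qed.

Lemma sherman_morrison : d != 0 ->
  invmx (P - u *m v^T) = X + d^-1 *: (X *m u *m v^T *m X).
Proof.
move=> d_neq0; apply: mulmx1_invmx.
rewrite mulmxDr -scalemxAr !mulmxA PB_Xu -!scalemxAl scalerA mulVf // scale1r.
by rewrite mulmxBl mulmxV // -!mulmxA subrK.
Qed.

End ShermanMorrison.

Lemma invmx_1B_diag_ge1 (R : realType) n (M : 'M[R]_n) a :
  nnegmx M -> 1%:M - M \in unitmx -> nnegmx (invmx (1%:M - M)) -> 1 <= invmx (1%:M - M) a a.
Proof.
move=> M0 M_unit X0; set X := invmx _.
have X_fix : X = 1%:M + M *m X.
  by rewrite -[1%:M in RHS](mulmxV M_unit) mulmxBl mul1mx subrK.
rewrite X_fix !mxE eqxx lerDl sumr_ge0 // => k _; exact: mulr_ge0.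
Qed.


Section CrossTerm.
Variable R : realType.

Lemma cauchy_schwarz (I : finType) (P : pred I) (f g : I -> R) :
  (\sum_(k | P k) f k * g k) ^+ 2 <=
  (\sum_(k | P k) f k ^+ 2) * (\sum_(k | P k) g k ^+ 2).
Proof.
have fg_sum : \sum_(k | P k) \sum_(l | P l) f k ^+ 2 * g l ^+ 2 =
    (\sum_(k | P k) f k ^+ 2) * (\sum_(k | P k) g k ^+ 2).
  by rewrite mulr_suml; apply: eq_bigr => k _; rewrite mulr_sumr.
have -> : (\sum_(k | P k) f k * g k) ^+ 2 =
    \sum_(k | P k) \sum_(l | P l) (f k * g k) * (f l * g l).
  by rewrite expr2 mulr_suml; apply: eq_bigr => k _; rewrite mulr_sumr.
have <- : \sum_(k | P k) \sum_(l | P l) (f k ^+ 2 * g l ^+ 2 + f l ^+ 2 * g k ^+ 2) / 2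
    = (\sum_(k | P k) f k ^+ 2) * (\sum_(k | P k) g k ^+ 2).
  under eq_bigr => k _ do rewrite -mulr_suml big_split /=.
  by rewrite -mulr_suml big_split /= fg_sum exchange_big /= fg_sum; field.
apply: ler_sum => k _; apply: ler_sum => l _.
have := sqr_ge0 (f k * g l - f l * g k); rewrite ler_pdivlMr //; nra.
Qed.

Lemma cross_bound_real (xi L Y2 P Q2 d : R) :
  0 <= L -> L ^+ 2 = xi ^+ 2 + Y2 -> 0 <= Y2 -> 0 <= P -> 0 <= Q2 ->
  d ^+ 2 <= Y2 * Q2 * P -> 2 * (xi * P + d) <= (xi + L) * (P + Q2).
Proof.
move=> L_ge0 L2 Y2_ge0 P_ge0 Q2_ge0 d2_le.
have sqr_le_abs (y z : R) : 0 <= z -> y ^+ 2 <= z ^+ 2 -> - z <= y <= z.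
  move=> z_ge0 yz; rewrite -ler_norml -(ler_pXn2r (_ : 0 < 2)%N) ?nnegrE //.
  by rewrite real_normK ?num_real.
have /andP[Nxi_le_L xi_le_L] : - L <= xi <= L by rewrite sqr_le_abs // L2 lerDl.
set A := (L - xi) * P + (L + xi) * Q2.
have A_ge0 : 0 <= A by rewrite addr_ge0 // mulr_ge0 // ?subr_ge0 // -lerBlDl sub0r.
have A2 : A ^+ 2 = ((L - xi) * P - (L + xi) * Q2) ^+ 2 + 4 * Y2 * P * Q2.
  by rewrite /A -[Y2](addKr (xi ^+ 2)) -L2; ring.
have /andP[_ dA] : - A <= 2 * d <= A.
  apply: sqr_le_abs => //; rewrite A2.
  apply: le_trans (_ : _ <= 4 * Y2 * P * Q2) _; last by rewrite lerDr sqr_ge0.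
  by rewrite exprMn -natrX -!mulrA ler_pM2l // [P * Q2]mulrC mulrA.
rewrite (_ : (xi + L) * (P + Q2) = 2 * (xi * P) + A); last by rewrite /A; ring.
by rewrite mulrDr lerD2l.
Qed.

Lemma cross_sum_le p q (V : 'M[R]_(p, q)) (x : 'I_p -> R) (i : 'I_p) :
  2 * \sum_a \sum_b V a b * (x a * V i b) <=
  (x i + Num.sqrt (\sum_a x a ^+ 2)) * sqfrob V.
Proof.
pose W b := \sum_(a | a != i) x a * V a b.
pose P := \sum_b V i b ^+ 2.
pose Y2 := \sum_(a | a != i) x a ^+ 2.
pose Q2 := \sum_b \sum_(a | a != i) V a b ^+ 2.
have -> : \sum_a \sum_b V a b * (x a * V i b) = x i * P + \sum_b V i b * W b.
  rewrite exchange_big /= /P mulr_sumr -big_split /=.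
  apply: eq_bigr => b _; rewrite (bigD1 i) //= /W mulr_sumr.
  by congr (_ + _); [ring | apply: eq_bigr => a _; ring].
have -> : sqfrob V = P + Q2.
  rewrite /sqfrob exchange_big /= /P /Q2 -big_split /=.
  by apply: eq_bigr => b _; rewrite (bigD1 i).
have Y2_ge0 : 0 <= Y2 by rewrite sumr_ge0 // => a _; rewrite sqr_ge0.
have L_sqr : Num.sqrt (\sum_a x a ^+ 2) ^+ 2 = x i ^+ 2 + Y2.
  rewrite sqr_sqrtr; first by rewrite (bigD1 i).
  by rewrite sumr_ge0 // => a _; rewrite sqr_ge0.
apply: (cross_bound_real (Y2 := Y2)); rewrite ?sqrtr_ge0 //.
- by rewrite sumr_ge0 // => b _; rewrite sqr_ge0.
- by rewrite sumr_ge0 // => b _; rewrite sumr_ge0 // => a _; rewrite sqr_ge0.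
apply: le_trans (cauchy_schwarz predT (fun b => V i b) W) _.
rewrite [leLHS]mulrC; apply: ler_wpM2r; first by rewrite sumr_ge0 // => b _; rewrite sqr_ge0.
by rewrite /Q2 mulr_sumr; apply: ler_sum => b _; apply: cauchy_schwarz.
Qed.

End CrossTerm.

Section BoundConstants.
Variables (R : realType) (n m : nat) (A : 'M[R]_n) (B : 'M[R]_(n, m)) (i j : 'I_n).
Local Notation X := (Xmx A).
Local Notation V := (Xmx A *m absmx B).

Lemma mxtrace_HX : \tr (HX A B) = sqfrob V.
Proof. by rewrite -mxtrace_mul_tr trmx_mul !mulmxA. Qed.

Lemma alpha_pq_le_alpha w : i != j -> alpha_pq A w i j <= alpha A w i j.
Proof. move=> ij; exact: (@le_bigmax_cond _ _ _ _ (i, j) (fun pq => pq.1 != pq.2) _ ij). Qed.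

Lemma Xmx_colnorm_le_beta : i != j -> X i j + colnorm A j <= beta A i j.
Proof.
move=> ij; rewrite le_max; apply/orP; right; apply: lerD; last exact: le_bigmax.
by rewrite -e_quadform; exact: (@le_bigmax_cond _ _ _ _ (i, j) (fun pq => pq.1 != pq.2) _ ij).
Qed.

Lemma colnormE : colnorm A j = Num.sqrt (\sum_k X k j ^+ 2).
Proof. by congr Num.sqrt; apply: eq_bigr => k _; rewrite mul_e_entry. Qed.

Lemma sum_sqr_col_le_gamma : \sum_k X k j ^+ 2 <= gamma A i.
Proof.
apply: le_trans (le_bigmax _ _ j); rewrite -(mulmxA _ X^T) e_quadform mxE.
by apply: ler_sum => k _; rewrite mxE expr2.
Qed.

Lemma sum_sqr_row_le_gammabar : \sum_b V i b ^+ 2 <= gammabar A B i.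
Proof.
apply: le_trans (le_bigmax _ _ i).
rewrite (_ : _ *m (Xmx A)^T = (e_ i)^T *m (V *m V^T)); last by rewrite trmx_mul !mulmxA.
by rewrite e_quadform mxE; apply: ler_sum => b _; rewrite [V^T _ _]mxE expr2.
Qed.

End BoundConstants.

Section Perturbation.
Variables (R : realType) (n m : nat) (A : 'M[R]_n) (B : 'M[R]_(n, m)) (i j : 'I_n) (w : R).
Local Notation X := (Xmx A).
Local Notation V := (Xmx A *m absmx B).
Local Notation E := (e_ j *m (e_ i)^T).
Local Notation Mt := (absmx A + `|w| *: E).
Local Notation a := (alpha_pq A w i j).
Hypotheses (X_unit : 1%:M - absmx A \in unitmx) (X_nneg : nnegmx X).
Hypotheses (Xt_unit : 1%:M - Mt \in unitmx) (Xt_nneg : nnegmx (invmx (1%:M - Mt))).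

Lemma perturbed_invmx : invmx (1%:M - Mt) = X + a *: (X *m E *m X).
Proof.
have MtE : 1%:M - Mt = (1%:M - absmx A) - (`|w| *: e_ j) *m (e_ i)^T.
  by rewrite opprD addrA scalemxAl.
have := Xt_unit; rewrite MtE => PB_unit.
rewrite sherman_morrison ?sherman_morrison_denom_neq0 //.
rewrite -scalemxAr mxE -/(Xmx A) -scalemxAr -!scalemxAl scalerA !mulmxA.
by rewrite /alpha_pq /Xent mulrC.
Qed.

Lemma alpha_pq_ge0 : 0 <= a.
Proof.
have XtX : invmx (1%:M - Mt) - X = `|w| *: (invmx (1%:M - Mt) *m E *m X).
  rewrite invmx_sub // [RHS]scalemxAl [in RHS]scalemxAr; congr (_ *m _ *m _).
  by rewrite opprB addrC addrA subrK [absmx A + _]addrC addrK.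
have := congr1 (fun M : 'M[R]_n => M j i) XtX; rewrite {1}perturbed_invmx addrC addKr /=.
have scaleE c (M : 'M[R]_n) p q : (c *: M) p q = c * M p q by rewrite mxE.
rewrite !scaleE !rank1_mul_entry => aXX.
have X_ge1 p : 1 <= X p p by apply: invmx_1B_diag_ge1 => //; apply: absmx_nneg.
have XX_gt0 : 0 < X j j * X i i by rewrite mulr_gt0 // (lt_le_trans ltr01).
have : 0 <= a * (X j j * X i i).
  by rewrite aXX !mulr_ge0 ?Xt_nneg ?X_nneg.
by rewrite pmulr_lge0.
Qed.

Lemma sqfrob_perturbed :
  sqfrob (invmx (1%:M - Mt) *m absmx B) =
  sqfrob V + a * (2 * \sum_k \sum_b V k b * (X k j * V i b))
           + a ^+ 2 * ((\sum_k X k j ^+ 2) * \sum_b V i b ^+ 2).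
Proof.
have sqr_entry k b : (invmx (1%:M - Mt) *m absmx B) k b ^+ 2 =
    V k b ^+ 2 + a * (2 * (V k b * (X k j * V i b))) + a ^+ 2 * (X k j ^+ 2 * V i b ^+ 2).
  rewrite perturbed_invmx // mulmxDl -scalemxAl mxE [X in _ + X]mxE.
  by rewrite -(mulmxA (X *m _)) rank1_mul_entry; ring.
rewrite /sqfrob; under eq_bigr => k _ do under eq_bigr => b _ do rewrite sqr_entry.
under eq_bigr => k _ do rewrite !big_split /= -!mulr_sumr.
by rewrite !big_split /= -!mulr_sumr mulr_suml.
Qed.

Lemma sqfrob_perturbed_le : i != j ->
  sqfrob (invmx (1%:M - Mt) *m absmx B) <=
  (1 + alpha A w i j * beta A i j) * \tr (HX A B)
  + alpha A w i j ^+ 2 * gamma A i * gammabar A B i.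
Proof.
move=> ij; rewrite sqfrob_perturbed // mxtrace_HX [(1 + _) * _]mulrDl mul1r -!addrA lerD2l.
have a_ge0 : 0 <= a by apply: alpha_pq_ge0.
have a_le : a <= alpha A w i j by apply: alpha_pq_le_alpha.
have S_ge0 := sqfrob_ge0 V.
have sum_ge0 (I : finType) (f : I -> R) : 0 <= \sum_k f k ^+ 2.
  by rewrite sumr_ge0 // => k _; rewrite sqr_ge0.
have /andP[xL_ge0 xL_le] : 0 <= X i j + colnorm A j <= beta A i j.
  by rewrite Xmx_colnorm_le_beta // addr_ge0 // colnormE sqrtr_ge0.
apply: lerD.
  have V_nneg : nnegmx V by apply: nnegmx_mul => //; apply: absmx_nneg.
  rewrite -mulrA; apply: ler_pM => //.
    by rewrite mulr_ge0 // !sumr_ge0 // => k _; rewrite sumr_ge0 // => b _; rewrite !mulr_ge0.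
  apply: le_trans (cross_sum_le V (fun k => X k j) i) _.
  by rewrite -colnormE; apply: ler_wpM2r.
rewrite -mulrA; apply: ler_pM.
- exact: sqr_ge0.
- by rewrite mulr_ge0 ?sum_ge0.
- by rewrite lerXn2r ?nnegrE // (le_trans a_ge0).
apply: ler_pM; rewrite ?sum_ge0 //.
  exact: sum_sqr_col_le_gamma.
exact: sum_sqr_row_le_gammabar.
Qed.

End Perturbation.

Section Hadamard.
Variable R : realType.

Definition posdef n (G : 'M[R]_n) := forall x : 'cV_n, x != 0 -> 0 < (x^T *m G *m x) 0 0.

Lemma posdef_diag_gt0 n (G : 'M[R]_n) k : posdef G -> 0 < G k k.
Proof. by move=> G_pd; rewrite -e_quadform; apply/G_pd/e_neq0. Qed.

Section Schur.
Variables (n : nat) (a : R) (b : 'rV[R]_n) (D : 'M[R]_n).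
Hypothesis a_neq0 : a != 0.
Let G : 'M[R]_(1 + n) := block_mx a%:M b b^T D.
Let S := D - a^-1 *: (b^T *m b).
Let L : 'M[R]_(1 + n) := block_mx 1%:M 0 (- a^-1 *: b^T) 1%:M.

Let schur_congruence : L *m G *m L^T = block_mx a%:M 0 0 S.
Proof.
rewrite /L /G tr_block_mx !trmx1 trmx0 !mulmx_block.
rewrite !mul1mx !mul0mx !mulmx1 !mulmx0 !addr0.
rewrite mul_mx_scalar scalerA mulrN mulfV // scaleN1r addNr mul0mx add0r.
rewrite linearZ /= trmxK mul_scalar_mx scalerA mulrN mulfV // scaleN1r addNr.
by rewrite -scalemxAl scaleNr addrC.
Qed.

Let det_L : \det L = 1.
Proof. by rewrite det_lblock !det1 mulr1. Qed.

Lemma det_schur : \det G = a * \det S.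
Proof.
have := congr1 determinant schur_congruence.
by rewrite !det_mulmx det_tr det_L mul1r mulr1 det_ublock det_mx11 mxE eqxx mulr1n.
Qed.

Lemma posdef_schur : posdef G -> posdef S.
Proof.
move=> G_pd y y_neq0; pose z : 'cV[R]_(1 + n) := col_mx 0 y.
have LTz_neq0 : L^T *m z != 0.
  have LT_unit : L^T \in unitmx by rewrite unitmxE det_tr det_L unitr1.
  apply: contra y_neq0 => /eqP LTz0.
  have : z = 0 by rewrite -(mulKmx LT_unit z) LTz0 mulmx0.
  by rewrite -col_mx0 => /eq_col_mx [_ ->].
have := G_pd _ LTz_neq0; rewrite trmx_mul trmxK.
rewrite (_ : _ *m _ *m _ = z^T *m (L *m G *m L^T) *m z); last by rewrite !mulmxA.
rewrite schur_congruence /z tr_col_mx trmx0 mul_row_block !mul0mx !mulmx0 !addr0 add0r.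
by rewrite mul_row_col mul0mx add0r.
Qed.

End Schur.

Lemma hadamard n (G : 'M[R]_n) : G^T = G -> posdef G ->
  0 < \det G /\ \det G <= \prod_k G k k.
Proof.
elim: n G => [|n IH] G G_sym G_pd.
  by rewrite det_mx00 big_ord0 ltr01 lexx.
pose G' : 'M[R]_(1 + n) := G.
have a_gt0 : 0 < G' 0 0 by apply: posdef_diag_gt0.
have G'E : G' = block_mx (G' 0 0)%:M (ursubmx G') (ursubmx G')^T (drsubmx G').
  rewrite -[LHS]submxK; congr block_mx; last by rewrite trmx_ursub /G' G_sym.
  rewrite [LHS]mx11_scalar !mxE; congr (G _ _)%:M; exact/val_inj.
set a := G' 0 0 in a_gt0 G'E; set b := ursubmx G' in G'E; set D := drsubmx G' in G'E.
have D_sym : D^T = D by rewrite /D trmx_drsub /G' G_sym.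
have S_sym : (D - a^-1 *: (b^T *m b))^T = D - a^-1 *: (b^T *m b).
  by rewrite linearB /= linearZ /= trmx_mul trmxK D_sym.
have S_pd : posdef (D - a^-1 *: (b^T *m b)).
  by apply: posdef_schur; rewrite ?gt_eqF // -G'E.
have [S_det_gt0 S_det_le] := IH _ S_sym S_pd.
have S_diag k : (D - a^-1 *: (b^T *m b)) k k <= D k k.
  rewrite !mxE lerBlDr lerDl mulr_ge0 ?invr_ge0 ?(ltW a_gt0) //.
  by rewrite big_ord1 !mxE -expr2 sqr_ge0.
change (0 < \det G' /\ \det G' <= \prod_(k < 1 + n) G' k k).
rewrite G'E det_schur ?gt_eqF // -G'E big_ord_recl; split; first exact: mulr_gt0.
rewrite ler_pM2l //; apply: le_trans S_det_le _; apply: ler_prod => k _.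
rewrite (ltW (posdef_diag_gt0 k S_pd)) /=; apply: le_trans (S_diag k) _.
by rewrite /D !mxE (_ : rshift 1 k = lift ord0 k) //; apply: val_inj.
Qed.

End Hadamard.

Section LogDet.
Variable R : realType.

Lemma prod_diag_le_AGM n (G : 'M[R]_n) : (forall k, 0 <= G k k) ->
  \prod_k G k k <= (\tr G / n%:R) ^+ n.
Proof.
move=> G_diag; have [+ _] := leif_AGM (A := predT) (fun k _ => G_diag k).
by rewrite card_ord.
Qed.

Lemma posdef_mxtrace_gt0 n (G : 'M[R]_n) : (0 < n)%N -> posdef G -> 0 < \tr G.
Proof.
case: n G => [//|n] G _ G_pd; rewrite /mxtrace big_ord_recl ltr_pwDl ?posdef_diag_gt0 //.
by rewrite sumr_ge0 // => k _; apply/ltW/posdef_diag_gt0.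
Qed.

Lemma ln_det_le_mxtrace n (G : 'M[R]_n) : (0 < n)%N -> G^T = G -> posdef G ->
  ln (\det G) <= n%:R * ln (\tr G / n%:R).
Proof.
move=> n_gt0 G_sym G_pd; have [det_gt0 det_le] := hadamard G_sym G_pd.
have tr_gt0 : 0 < \tr G / n%:R by rewrite divr_gt0 ?ltr0n ?posdef_mxtrace_gt0.
rewrite mulr_natl -lnXn // ler_ln ?posrE ?exprn_gt0 //.
by apply: le_trans det_le (prod_diag_le_AGM _) => k; apply/ltW/posdef_diag_gt0.
Qed.

End LogDet.

Section GramianPosdef.
Variable R : realType.

Lemma cV_sqnorm n (y : 'cV[R]_n) : (y^T *m y) 0 0 = \sum_k y k 0 ^+ 2.
Proof. by rewrite mxE; apply: eq_bigr => k _; rewrite mxE expr2. Qed.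

Lemma cV_sqnorm_ge0 n (y : 'cV[R]_n) : 0 <= (y^T *m y) 0 0.
Proof. by rewrite cV_sqnorm sumr_ge0 // => k _; apply: sqr_ge0. Qed.

Lemma cV_sqnorm_eq0 n (y : 'cV[R]_n) : (y^T *m y) 0 0 = 0 -> y = 0.
Proof.
rewrite cV_sqnorm => /eqP; rewrite psumr_eq0 => [/allP y0|k _]; last exact: sqr_ge0.
apply/matrixP => k l; rewrite (ord1 l) mxE; apply/eqP.
by have := y0 k (mem_index_enum k); rewrite sqrf_eq0.
Qed.

Lemma gramian_sym n m T (Z : 'M[R]_n) (B : 'M[R]_(n, m)) :
  (gramian T Z B)^T = gramian T Z B.
Proof. by rewrite gramianE linear_sum /=; apply: eq_bigr => t _; rewrite trmx_mul trmxK. Qed.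

Lemma gramian_posdef n m T (Z : 'M[R]_n) (B : 'M[R]_(n, m)) :
  controllable T Z B -> posdef (gramian T Z B).
Proof.
move=> ctrl x x_neq0; pose y t := (Z ^+ t *m B)^T *m x.
have -> : (x^T *m gramian T Z B *m x) 0 0 = \sum_(t < T) ((y t)^T *m y t) 0 0.
  rewrite gramianE mulmx_sumr mulmx_suml summxE; apply: eq_bigr => t _.
  by rewrite /y !trmx_mul !trmxK !mulmxA.
rewrite lt_def sumr_ge0 ?andbT => [|t _]; last exact: cV_sqnorm_ge0.
apply: contra x_neq0 => /eqP sum0.
have y0 (t : 'I_T) : y t = 0.
  apply: cV_sqnorm_eq0; exact: (psumr_eq0P (fun (s : 'I_T) _ => cV_sqnorm_ge0 (y s)) sum0).
have /sub_sumsmxP[u xE] : (x^T <= \sum_(t < T) <<(Z ^+ t *m B)^T>>)%MS by apply: submx_full.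
apply/eqP/cV_sqnorm_eq0; rewrite xE mulmx_suml big1 ?mxE // => t _.
have /submxP[D ->] : (<<(Z ^+ t *m B)^T>> <= (Z ^+ t *m B)^T)%MS by rewrite genmxE.
by rewrite -!mulmxA -/(y t) y0 !mulmx0.
Qed.

End GramianPosdef.

Section BoundFunction.
Variable R : realType.

Lemma sigma_of_ge0 (x : R) : 0 <= sigma_of x.
Proof. by rewrite /sigma_of; case: ifP. Qed.

Lemma bound_ler n (sg x y : R) : (0 < n)%N -> 0 <= sg -> 0 < x -> x <= y ->
  bound n sg x <= bound n sg y.
Proof.
move=> n_gt0 sg_ge0 x_gt0 xy; rewrite /bound ler_wpM2l ?mulr_ge0 //.
have c_gt0 : 0 < n%:R `^ sg^-1 :> R by rewrite powR_gt0 // ltr0n.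
by rewrite ler_ln ?posrE ?divr_gt0 ?ler_pM2r ?invr_gt0 // (lt_le_trans x_gt0).
Qed.

Lemma bound_sigma_ge n (t x : R) : (0 < n)%N -> 0 < t -> t <= x ->
  n%:R * ln (t / n%:R) <= bound n (sigma_of x) x.
Proof.
move=> n_gt0 t_gt0 tx; have x_gt0 : 0 < x by apply: lt_le_trans tx.
have nR_gt0 : 0 < n%:R :> R by rewrite ltr0n.
have ln_le : ln t <= ln x by rewrite ler_ln ?posrE.
rewrite /bound /sigma_of lnM ?posrE ?invr_gt0 // lnV ?posrE //.
case: ifP => x_le1.
  rewrite invr1 powRr1 ?ler0n // lnM ?posrE ?invr_gt0 // lnV ?posrE // mul1r.
  by rewrite ler_wpM2l ?(ltW nR_gt0) //; lra.
rewrite lnM ?posrE ?invr_gt0 ?powR_gt0 // lnV ?posrE ?powR_gt0 // ln_powR.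
have lnx_ge0 : 0 <= ln x by rewrite ln_ge0 // ltW // ltNge x_le1.
rewrite (_ : 2 * n%:R * _ = n%:R * (2 * ln x - ln n%:R)); last by field.
by rewrite ler_wpM2l ?(ltW nR_gt0) //; lra.
Qed.

End BoundFunction.

Unset Implicit Arguments.

Theorem theorem5p3 (R : realType) (n m T : nat)
  (A : 'M[R]_n) (B : 'M[R]_(n, m)) (i j : 'I_n) (w : R) :
  spectral_radius (absmx A) < 1 ->
  (0 < T)%N ->
  i != j ->
  spectral_radius (absmx A + `|w| *: (e_ j *m (e_ i)^T)) < 1 ->
  controllable T A B ->
  controllable T (A + w *: (e_ j *m (e_ i)^T)) B ->
  let WA := gramian T A B in
  let sA := sigma_of (\tr WA) in
  let tau := (1 + alpha A w i j * beta A i j) * \tr (HX A B)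
             + alpha A w i j ^+ 2 * gamma A i * gammabar A B i in
  let st := sigma_of tau in
  ln (\det WA) <= bound n sA (\tr WA) /\
  bound n sA (\tr WA) <= bound n sA (\tr (HX A B)) /\
  ln (\det (gramian T (A + w *: (e_ j *m (e_ i)^T)) B)) <= bound n st tau.
Proof.
move=> A_lt1 _ ij At_lt1 ctrl ctrlt WA sA tau st.
have n_gt0 : (0 < n)%N by apply: leq_ltn_trans (ltn_ord i).
set E := e_ j *m (e_ i)^T; set Wt := gramian T (A + w *: E) B.
have E_nneg : nnegmx E by move=> a b; rewrite !mxE big_ord1 !mxE mulr_ge0.
have Mt_nneg : nnegmx (absmx A + `|w| *: E).
  by move=> a b; rewrite mxE addr_ge0 ?absmx_nneg // nnegmxZ.
have X_unit := spectral_radius_lt1_unitmx A_lt1 (lexx 1).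
have Xt_unit := spectral_radius_lt1_unitmx At_lt1 (lexx 1).
have X_nneg := invmx_1B_nneg (absmx_nneg A) (fun s => spectral_radius_lt1_unitmx A_lt1).
have Xt_nneg := invmx_1B_nneg Mt_nneg (fun s => spectral_radius_lt1_unitmx At_lt1).
have trWA_le : \tr WA <= \tr (HX A B).
  by rewrite mxtrace_HX; apply: mxtrace_gramian_le => //; apply: abs_le_absmx.
have trWt_le : \tr Wt <= tau.
  apply: (le_trans _ (sqfrob_perturbed_le B X_unit X_nneg Xt_unit Xt_nneg ij)).
  apply: mxtrace_gramian_le => //.
  exact/abs_le_mx_add/abs_le_mxZ/nneg_abs_le_mx/E_nneg/abs_le_absmx.
have trWA_gt0 := posdef_mxtrace_gt0 n_gt0 (gramian_posdef ctrl).
have trWt_gt0 := posdef_mxtrace_gt0 n_gt0 (gramian_posdef ctrlt).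
split; last split.
- apply: le_trans (ln_det_le_mxtrace n_gt0 (gramian_sym _ _ _) (gramian_posdef ctrl)) _.
  exact: bound_sigma_ge.
- exact/bound_ler/trWA_le/trWA_gt0/sigma_of_ge0.
apply: le_trans (ln_det_le_mxtrace n_gt0 (gramian_sym _ _ _) (gramian_posdef ctrlt)) _.
exact: bound_sigma_ge.
Qed.
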